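(* Let $Y$ be a solid vector space and $(X,d)$ a cone metric space over $Y$. Then $(X,d)$ is complete if and only if every nested sequence $\overline U(x_1,r_1)\supseteq\overline U(x_2,r_2)\supseteq\cdots$ of closed balls in $X$ with $r_n\to0$ in $Y$ has nonempty intersection.
   Context: Vector space with convergence: a real vector space $Y$ with a relation $\to$ between sequences in $Y$ and points of $Y$ (uniqueness of limits not assumed) such that (C1) $x_n\to x$, $y_n\to y$ imply $x_n+y_n\to x+y$; (C2) $x_n\to x$, $\lambda\in\mathbb R$ imply $\lambda x_n\to\lambda x$; (C3) $\lambda_n\to\lambda$ in $\mathbb R$ imply $\lambda_n x\to\lambda x$. $A\subseteq Y$ is open if $x_n\to x\in A$ implies $x_n\in A$ for all but finitely many $n$; closed if $x_n\to x$, $x_n\in A$ $\forall n$ imply $x\in A$; $A^\circ$ is the union of all open subsets of $A$. A cone is a nonempty closed $K$ with $\lambda K\subseteq K$ ($\lambda\ge0$), $K+K\subseteq K$, $K\cap(-K)=\{0\}$; solid if $K\ne\{0\}$, $K^\circ\neq\emptyset$. A vector ordering is a partial order $\preceq$ with (V1) $x\preceq y\Rightarrow x+z\preceq y+z$; (V2) $\lambda\ge0$, $x\preceq y\Rightarrow\lambda x\preceq\lambda y$; (V3) $x_n\to x$, $y_n\to y$, $x_n\preceq y_n$ $\forall n\Rightarrow x\preceq y$. Solid vector space: positive cone $K=\{x:x\succeq 0\}$ solid, with $x\prec y$ iff $y-x\in K^\circ$. Cone metric space over $Y$: nonempty $X$ with $d\colon X\times X\to Y$, $d(x,y)\succeq0$,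 $d(x,y)=0$ iff $x=y$, $d(x,y)=d(y,x)$, $d(x,y)\preceq d(x,z)+d(z,y)$. $X$ carries the topology with basis $U(x,r)=\{y:d(y,x)\prec r\}$ ($r\succ0$), so $x_n\to x$ iff for each $c\succ0$, $d(x_n,x)\prec c$ for all but finitely many $n$. Closed ball $\overline U(x,r)=\{y:d(y,x)\preceq r\}$ for $r\succeq0$. Cauchy: for every $c\succ0$ there is $N$ with $d(x_n,x_m)\prec c$ for $n,m>N$; complete: every Cauchy sequence converges. *)

From HB Require Import structures.
From mathcomp Require Import all_boot all_order all_algebra.
From mathcomp Require Import reals.
Set Implicit Arguments. Unset Strict Implicit. Unset Printing Implicit Defensive.
Import Order.TTheory GRing.Theory Num.Theory.
Local Open Scope ring_scope.

Section VSConv.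
Variables (R : realType) (Y : lmodType R).

Definition real_cvg (lam : nat -> R) (l : R) : Prop :=
  forall eps : R, 0 < eps -> exists N : nat, forall n : nat, (N <= n)%N -> `|lam n - l| < eps.

Variable conv : (nat -> Y) -> Y -> Prop.

Definition conv_vs_axioms : Prop :=
  [/\ (forall x y a b, conv x a -> conv y b -> conv (fun n => x n + y n) (a + b)),
      (forall x a (lam : R), conv x a -> conv (fun n => lam *: x n) (lam *: a)) &
      (forall (lam : nat -> R) (l : R) (x : Y), real_cvg lam l ->
          conv (fun n => lam n *: x) (l *: x))].

Definition is_open (A : Y -> Prop) : Prop :=
  forall (x : nat -> Y) (a : Y), conv x a -> A a ->
    exists N : nat, forall n : nat, (N <= n)%N -> A (x n).

Definition is_closed (A : Y -> Prop) : Prop :=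
  forall (x : nat -> Y) (a : Y), conv x a -> (forall n, A (x n)) -> A a.

Definition interior (A : Y -> Prop) : Y -> Prop :=
  fun y => exists U : Y -> Prop, [/\ is_open U, (forall z, U z -> A z) & U y].

Definition is_cone (K : Y -> Prop) : Prop :=
  [/\ (exists y, K y), is_closed K,
      (forall (lam : R) y, 0 <= lam -> K y -> K (lam *: y)),
      (forall y z, K y -> K z -> K (y + z)) &
      (forall y, K y -> K (- y) -> y = 0)].

Definition solid_cone (K : Y -> Prop) : Prop :=
  [/\ is_cone K, (exists y, K y /\ y <> 0) & (exists y, interior K y)].

Variable le : Y -> Y -> Prop.

Definition vector_ordering : Prop :=
  [/\ (forall x, le x x),
      (forall x y, le x y -> le y x -> x = y) &
      (forall x y z, le x y -> le y z -> le x z)] /\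
  [/\ (forall x y z, le x y -> le (x + z) (y + z)),
      (forall (lam : R) x y, 0 <= lam -> le x y -> le (lam *: x) (lam *: y)) &
      (forall x y a b, conv x a -> conv y b -> (forall n, le (x n) (y n)) -> le a b)].

Definition pos_cone : Y -> Prop := fun y => le 0 y.

Definition solid_vector_space : Prop :=
  [/\ conv_vs_axioms, vector_ordering & solid_cone pos_cone].

Definition slt (x y : Y) : Prop := interior pos_cone (y - x).

Variables (X : Type) (d : X -> X -> Y).

Definition cone_metric : Prop :=
  [/\ inhabited X,
      (forall x y, le 0 (d x y)),
      (forall x y, d x y = 0 <-> x = y),
      (forall x y, d x y = d y x) &
      (forall x y z, le (d x y) (d x z + d z y))].

Definition cm_converges (x : nat -> X) (a : X) : Prop :=
  forall c : Y, slt 0 c -> exists N : nat, forall n : nat, (N <= n)%N -> slt (d (x n) a) c.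

Definition cm_cauchy (x : nat -> X) : Prop :=
  forall c : Y, slt 0 c -> exists N : nat, forall n m : nat, (N < n)%N -> (N < m)%N ->
    slt (d (x n) (x m)) c.

Definition cm_complete : Prop :=
  forall x : nat -> X, cm_cauchy x -> exists a : X, cm_converges x a.

Definition closed_ball (x : X) (r : Y) : X -> Prop := fun y => le (d y x) r.

Definition nested_balls_property : Prop :=
  forall (x : nat -> X) (r : nat -> Y),
    (forall n, le 0 (r n)) ->
    (forall n y, closed_ball (x n.+1) (r n.+1) y -> closed_ball (x n) (r n) y) ->
    conv r 0 ->
    exists z : X, forall n, closed_ball (x n) (r n) z.

End VSConv.

From HB Require Import structures.
From mathcomp Require Import all_boot all_order all_algebra.
From mathcomp Require Import reals.
From Stdlib Require Import ClassicalEpsilon.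
Import Order.TTheory GRing.Theory Num.Theory.
Local Open Scope ring_scope.

(* Fix an interior point [c0] of the positive cone; [2^-k c0 >> 0] tends to [0].
   Completeness gives a point in all nested balls: their centres form a Cauchy
   sequence, and its limit [a] satisfies [d(a, x_n) <= c + r_n] for every
   [c >> 0], hence [d(a, x_n) <= r_n] by letting [c = 2^-k c0] and using (V3).
   Conversely, a Cauchy sequence has a subsequence [y] with
   [d(y_k, y_(k+1)) << 2^-(k+1) c0], so the balls [B(y_k, 2^-k c0)] are nested;
   a point of their intersection is a limit of [y], hence of the whole
   Cauchy sequence. *)

Lemma real_cvg_half_expn (R : realType) : real_cvg (fun n => (2^-1 : R) ^+ n) 0.
Proof.
move=> e e0; exists (Num.Def.archi_bound e^-1) => n hn.
have /archi_boundP : 0 <= e^-1 by rewrite invr_ge0 ltW.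
rewrite subr0 exprVn ger0_norm ?invr_ge0 ?exprn_ge0 // => h.
rewrite invf_plt ?posrE ?exprn_gt0 //.
apply: (lt_trans h); rewrite -natrX ltr_nat.
exact: leq_ltn_trans hn (ltn_expl _ _).
Qed.

Fixpoint strict_majorant (M : nat -> nat) (k : nat) : nat :=
  if k is k'.+1 then (maxn (strict_majorant M k') (M k)).+1 else (M 0%N).+1.

Lemma strict_majorant_gt M k : (M k < strict_majorant M k)%N.
Proof. by case: k => [|k] //=; rewrite ltnS leq_maxr. Qed.

Lemma strict_majorant_ltS M k : (strict_majorant M k < strict_majorant M k.+1)%N.
Proof. by rewrite /= ltnS leq_maxl. Qed.

Lemma strict_majorant_ge M k : (k <= strict_majorant M k)%N.
Proof.
elim: k => [|k IH] //.
exact: leq_ltn_trans IH (strict_majorant_ltS M k).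
Qed.

Section SolidVectorSpace.
Variables (R : realType) (Y : lmodType R).
Variables (conv : (nat -> Y) -> Y -> Prop) (le : Y -> Y -> Prop).
Hypothesis HY : solid_vector_space conv le.

Local Notation vlt := (slt conv le).

Lemma conv_add {x y a b} : conv x a -> conv y b -> conv (fun n => x n + y n) (a + b).
Proof. by case: HY => [[+ _ _] _ _]; apply. Qed.

Lemma conv_scale {x a} (lam : R) : conv x a -> conv (fun n => lam *: x n) (lam *: a).
Proof. by case: HY => [[_ + _] _ _]; apply. Qed.

Lemma conv_scale_seq {lam : nat -> R} {l} v :
  real_cvg lam l -> conv (fun n => lam n *: v) (l *: v).
Proof. by case: HY => [[_ _ +] _ _]; apply. Qed.

Lemma conv_cst v : conv (fun _ => v) v.
Proof.
have := @conv_scale_seq (fun _ => 1) 1 v; rewrite scale1r; apply.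
by move=> e e0; exists 0%N => n _; rewrite subrr normr0.
Qed.

Lemma vle_trans {x y z} : le x y -> le y z -> le x z.
Proof. by case: HY => _ [[_ _ +] _] _; apply. Qed.

Lemma vle_addr {x y} z : le x y -> le (x + z) (y + z).
Proof. by case: HY => _ [_ [+ _ _]] _; apply. Qed.

Lemma vle_scale {lam : R} {x y} : 0 <= lam -> le x y -> le (lam *: x) (lam *: y).
Proof. by case: HY => _ [_ [_ + _]] _; apply. Qed.

Lemma vle_lim {x y a b} : conv x a -> conv y b -> (forall n, le (x n) (y n)) -> le a b.
Proof. by case: HY => _ [_ [_ _ +]] _; apply. Qed.

Lemma vle_add {x y x' y'} : le x y -> le x' y' -> le (x + x') (y + y').
Proof.
move=> h h'; apply: (vle_trans (vle_addr x' h)).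
by rewrite (addrC y) (addrC y); apply: vle_addr.
Qed.

Lemma subv_ge0 x y : le 0 (y - x) <-> le x y.
Proof.
split; first by move/(vle_addr x); rewrite add0r subrK.
by move/(vle_addr (- x)); rewrite subrr.
Qed.

(* Translating the open witness of [u] by [v] keeps it open and inside the cone. *)
Lemma interior_addr {u v} :
  interior conv (pos_cone le) u -> le 0 v -> interior conv (pos_cone le) (u + v).
Proof.
move=> [U [oU sU Uu]] v0; exists (fun z => U (z - v)); split.
- move=> s a cs Ua.
  have [N HN] := oU _ _ (conv_add cs (conv_cst (- v))) Ua.
  by exists N.
- by move=> z /sU hz; have := vle_add hz v0; rewrite add0r subrK.
- by rewrite addrK.
Qed.

Lemma vlt_vle {x y} : vlt x y -> le x y.
Proof. by move=> [U [_ sU /sU]] /subv_ge0. Qed.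

Lemma vle_vlt_trans {x y c} : le x y -> vlt y c -> vlt x c.
Proof.
move=> /subv_ge0 hxy hyc.
by have := interior_addr hyc hxy; rewrite addrA subrK.
Qed.

Lemma vlt_add {x y x' y'} : vlt x y -> vlt x' y' -> vlt (x + x') (y + y').
Proof.
move=> h /vlt_vle /subv_ge0 h'; have := interior_addr h h'.
by rewrite /slt opprD addrACA.
Qed.

Lemma vlt0_scale (lam : R) c : 0 < lam -> vlt 0 c -> vlt 0 (lam *: c).
Proof.
rewrite /slt !subr0 => l0 [U [oU sU Uc]].
exists (fun z => U (lam^-1 *: z)); split.
- move=> s a cs Ua.
  have [N HN] := oU _ _ (conv_scale lam^-1 cs) Ua.
  by exists N.
- move=> z /sU hz; have := vle_scale (ltW l0) hz.
  by rewrite scaler0 scalerA divff ?gt_eqF // scale1r.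
- by rewrite scalerA mulVf ?gt_eqF // scale1r.
Qed.

Lemma vlt_eventually {r c} : conv r 0 -> vlt 0 c ->
  exists N, forall n, (N <= n)%N -> vlt (r n) c.
Proof.
move=> cr [U [oU sU Uc]].
have := conv_add (conv_cst c) (conv_scale (-1) cr).
rewrite scaler0 addr0 => cv.
rewrite subr0 in Uc; have [N HN] := oU _ _ cv Uc.
by exists N => n /HN h; exists U; rewrite /slt -scaleN1r.
Qed.

Lemma exists_vgt0 : exists c, vlt 0 c.
Proof. by case: HY => _ _ [_ _ [c Ic]]; exists c; rewrite /slt subr0. Qed.

Definition halves (c : Y) (k : nat) : Y := (2^-1 : R) ^+ k *: c.

Lemma conv_halves c : conv (halves c) 0.
Proof. by have := conv_scale_seq c (@real_cvg_half_expn R); rewrite scale0r. Qed.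

Lemma halves_gt0 {c} k : vlt 0 c -> vlt 0 (halves c k).
Proof. by apply: vlt0_scale; rewrite exprn_gt0 // invr_gt0. Qed.

Lemma halves0 c : halves c 0 = c.
Proof. by rewrite /halves expr0 scale1r. Qed.

Lemma halvesS c k : halves c k.+1 + halves c k.+1 = halves c k.
Proof.
have half_add : (2^-1 : R) + 2^-1 = 1 by rewrite [RHS]splitr mul1r.
by rewrite /halves -scalerDl exprS -mulrDl half_add mul1r.
Qed.

(* [a <= c + b] for [c = 2^-k c0] and [k -> oo] gives [a <= b] in the limit (V3). *)
Lemma vle_of_vlt_add a b : (forall c, vlt 0 c -> le a (c + b)) -> le a b.
Proof.
move=> hab; have [c0 hc0] := exists_vgt0.
have := conv_add (conv_halves c0) (conv_cst b); rewrite add0r => cv.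
by apply: (vle_lim (conv_cst a) cv) => k; apply/hab/halves_gt0.
Qed.

Variables (X : Type) (d : X -> X -> Y).
Hypothesis Hd : cone_metric le d.

Local Notation ball := (closed_ball le d).
Local Notation converges := (cm_converges conv le d).
Local Notation cauchy := (cm_cauchy conv le d).

Lemma dist_sym x y : d x y = d y x.
Proof. by case: Hd. Qed.

Lemma dist_triangle x y z : le (d x y) (d x z + d z y).
Proof. by case: Hd. Qed.

Lemma dist_xx x : d x x = 0.
Proof. by case: Hd => _ _ h _ _; apply/h. Qed.

Lemma converges_of_dist_le {x a r} :
  conv r 0 -> (forall n, le (d (x n) a) (r n)) -> converges x a.
Proof.
move=> cr hxa c hc; have [N HN] := vlt_eventually cr hc.
by exists N => n /HN; apply: vle_vlt_trans.
Qed.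

Lemma cauchy_of_dist_le {x r} :
  conv r 0 -> (forall n m, (n <= m)%N -> le (d (x m) (x n)) (r n)) -> cauchy x.
Proof.
move=> cr hx c hc; have [N HN] := vlt_eventually cr hc.
exists N => n m hn hm; case: (leqP n m) => h.
  by rewrite dist_sym; apply: vle_vlt_trans (hx n m h) (HN n (ltnW hn)).
exact: vle_vlt_trans (hx m n (ltnW h)) (HN m (ltnW hm)).
Qed.

Section NestedBalls.
Variables (x : nat -> X) (r : nat -> Y).
Hypothesis r_ge0 : forall n, le 0 (r n).
Hypothesis nested : forall n y, ball (x n.+1) (r n.+1) y -> ball (x n) (r n) y.

Lemma nested_ball_mem n m y : (n <= m)%N -> ball (x m) (r m) y -> ball (x n) (r n) y.
Proof.
move=> /subnKC <-; elim: (m - n)%N y => [|k IH] y; first by rewrite addn0.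
by rewrite addnS => /nested /IH.
Qed.

Lemma nested_ball_centers n m : (n <= m)%N -> le (d (x m) (x n)) (r n).
Proof. by move/nested_ball_mem; apply; rewrite /closed_ball dist_xx. Qed.

Lemma nested_ball_limit a n : converges x a -> ball (x n) (r n) a.
Proof.
move=> ha; apply: vle_of_vlt_add => c hc; have [N HN] := ha c hc.
apply: vle_trans (dist_triangle a (x n) (x (maxn N n))) _.
apply: vle_add; last exact/nested_ball_centers/leq_maxr.
by rewrite dist_sym; apply/vlt_vle/HN/leq_maxl.
Qed.

Lemma nested_centers_cauchy : conv r 0 -> cauchy x.
Proof. by move/cauchy_of_dist_le; apply; apply: nested_ball_centers. Qed.

End NestedBalls.

Lemma nested_balls_of_complete :
  cm_complete conv le d -> nested_balls_property conv le d.
Proof.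
move=> hc x r r_ge0 nested cr.
have [a ha] := hc x (nested_centers_cauchy x r r_ge0 nested cr).
exists a => n; exact: nested_ball_limit x r r_ge0 nested a n ha.
Qed.

Lemma cauchy_subseq_converges {x} {phi : nat -> nat} {a} :
  cauchy x -> (forall k, (k <= phi k)%N) -> converges (fun k => x (phi k)) a ->
  converges x a.
Proof.
move=> hx phi_ge hy c hc; have hc1 := halves_gt0 1 hc.
have [N1 H1] := hx _ hc1; have [N2 H2] := hy _ hc1.
exists N1.+1 => n hn; pose k := maxn N1.+1 N2.
have hk : (N1 < phi k)%N := leq_trans (leq_maxl _ _) (phi_ge k).
apply: vle_vlt_trans (dist_triangle _ _ (x (phi k))) _.
rewrite -(halves0 c) -halvesS.
exact: vlt_add (H1 _ _ hn hk) (H2 _ (leq_maxr _ _)).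
Qed.

Lemma cauchy_fast_subseq {x r} : cauchy x -> (forall k, vlt 0 (r k)) ->
  exists2 phi : nat -> nat, forall k, (k <= phi k)%N &
    forall k, vlt (d (x (phi k.+1)) (x (phi k))) (r k).
Proof.
move=> hx hr; have [M HM] := ClassicalEpsilon.choice _ (fun k => hx _ (hr k)).
exists (strict_majorant M) => k; first exact: strict_majorant_ge.
apply: HM; last exact: strict_majorant_gt.
exact: ltn_trans (strict_majorant_gt M k) (strict_majorant_ltS M k).
Qed.

Lemma complete_of_nested_balls :
  nested_balls_property conv le d -> cm_complete conv le d.
Proof.
move=> hn x hx; have [c hc] := exists_vgt0.
have [phi phi_ge hphi] := cauchy_fast_subseq hx (fun k => halves_gt0 k.+1 hc).
pose y k := x (phi k).
have [z hz] : exists z, forall k, ball (y k) (halves c k) z.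
  apply: (hn y (halves c)) (conv_halves c) => [k|k w hw].
    exact/vlt_vle/halves_gt0.
  rewrite /closed_ball -halvesS; apply: vle_trans (dist_triangle w _ (y k.+1)) _.
  exact: vle_add hw (vlt_vle (hphi k)).
exists z; apply: cauchy_subseq_converges hx phi_ge _.
apply: converges_of_dist_le (conv_halves c) _ => k.
rewrite dist_sym; exact: hz.
Qed.

End SolidVectorSpace.

Theorem theorem9p22 (R : realType) (Y : lmodType R)
  (conv : (nat -> Y) -> Y -> Prop) (le : Y -> Y -> Prop)
  (HY : solid_vector_space conv le)
  (X : Type) (d : X -> X -> Y) (Hd : cone_metric le d) :
  cm_complete conv le d <-> nested_balls_property conv le d.
Proof.
split; [exact: nested_balls_of_complete | exact: complete_of_nested_balls].
Qed.
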